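(* Let $h:\mathbb{R}\to\mathbb{R}$ be of class $C^1$, let $x_0\in\mathbb{R}$, and let $\Phi$ be a positive function of class $C^2$ on an interval $]x_-,x_+[$ with $x_-<x_0<x_+$, such that $h(x)\neq\Phi^2(x)$ on $]x_-,x_+[$. Define $u_{\mathtt{top}},u_{\mathtt{bot}}$ as in the context, and \[ \Theta_{\mathtt{top}}(x)=\frac{u'_{\mathtt{top}}(x)}{u_{\mathtt{top}}(x)}=\Phi(x)\frac{\Phi'(x)-\sqrt{\left[h(x)-\Phi^{2}(x)\right]^{2}+\left[\Phi'(x)\right]^{2}}}{h(x)-\Phi^{2}(x)},\quad \Theta_{\mathtt{bot}}(x)=\frac{u'_{\mathtt{bot}}(x)}{u_{\mathtt{bot}}(x)}=\Phi(x)\frac{\Phi'(x)+\sqrt{\left[h(x)-\Phi^{2}(x)\right]^{2}+\left[\Phi'(x)\right]^{2}}}{h(x)-\Phi^{2}(x)}. \] Then $\Theta_{\mathtt{top}}$ and $\Theta_{\mathtt{bot}}$ are two distinct solutions of the Riccati equation $\Theta'(x)+\Theta^2(x)+h(x)=0$ on $]x_-,x_+[$ if and only if $\Phi$ satisfies on $]x_-,x_+[$ \[ \Phi''(x)=\frac{3\Phi^{2}(x)+h(x)}{\Phi^{2}(x)-h(x)}\frac{\left[\Phi'(x)\right]^{2}}{\Phi(x)}-\frac{h'(x)\Phi'(x)}{\Phi^{2}(x)-h(x)}+\frac{\Phi^{4}(x)-h^{2}(x)}{\Phi(x)}. \] Moreover, these relations can be uniquely inverted: \[ \Phi(x)=\sqrt{-\frac{u'_{\mathtt{top}}(x)u'_{\mathtt{bot}}(x)}{u_{\mathtt{top}}(x)u_{\mathtt{bot}}(x)}}=\sqrt{-\Theta_{\mathtt{top}}(x)\Theta_{\mathtt{bot}}(x)}.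 \]
   Context: For $x\in]x_-,x_+[$, $u_{\mathtt{top}}(x)=\exp\left[\int_{x_0}^{x}\Theta_{\mathtt{top}}(\xi)\,d\xi\right]$ and $u_{\mathtt{bot}}(x)=\exp\left[\int_{x_0}^{x}\Theta_{\mathtt{bot}}(\xi)\,d\xi\right]$ with $\Theta_{\mathtt{top}},\Theta_{\mathtt{bot}}$ given by the displayed formulas. The ODE for $\Phi$ is the geodesic equation in explicit form for the metric $g_h=\left[(h(x)-\varPhi^2)^2dx^2+d\varPhi^2\right]/\varPhi^2$ on the upper half plane $\varPhi>0$. *)

From Stdlib Require Import Reals.
From Coquelicot Require Import Coquelicot.
Open Scope R_scope.

Definition Theta_top (h Phi : R -> R) (x : R) : R :=
  Phi x * (Derive Phi x
           - sqrt ((h x - Phi x ^ 2) ^ 2 + (Derive Phi x) ^ 2))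
        / (h x - Phi x ^ 2).

Definition Theta_bot (h Phi : R -> R) (x : R) : R :=
  Phi x * (Derive Phi x
           + sqrt ((h x - Phi x ^ 2) ^ 2 + (Derive Phi x) ^ 2))
        / (h x - Phi x ^ 2).

Definition u_top (h Phi : R -> R) (x0 x : R) : R :=
  exp (RInt (Theta_top h Phi) x0 x).

Definition u_bot (h Phi : R -> R) (x0 x : R) : R :=
  exp (RInt (Theta_bot h Phi) x0 x).

Definition riccati_sol (h Theta : R -> R) (a b : R) : Prop :=
  forall x, a < x < b -> is_derive Theta x (- (Theta x ^ 2 + h x)).

(** Both branches are [theta e := Phi (Phi' + e S) / (h - Phi^2)] with
    [S := sqrt ((h - Phi^2)^2 + Phi'^2)] and [e = -1] (top) or [e = 1] (bot).
    Differentiating and using [S^2 = (h - Phi^2)^2 + Phi'^2] gives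
    [theta_e' + theta_e^2 + h = (S + e Phi') Phi (Phi'' - R) / (S (h - Phi^2))],
    where [R] is the right-hand side of the ODE for [Phi''].  Since
    [h <> Phi^2] forces [S > |Phi'|], the factor in front of [Phi'' - R] never
    vanishes, so either branch solves the Riccati equation iff [Phi'' = R].
    The branches differ by [2 Phi S / (h - Phi^2) <> 0], their product is
    [Phi^2 (Phi'^2 - S^2) / (h - Phi^2)^2 = - Phi^2], and [u'/u = theta] by the
    fundamental theorem of calculus, which yields the inversion formulas. *)
From Stdlib Require Import Reals Lra FunctionalExtensionality.
From Coquelicot Require Import Coquelicot.
Open Scope R_scope.

Lemma Derive_exp_RInt (f : R -> R) (a b x0 x : R) :
  (forall z, a < z < b -> continuous f z) -> a < x0 < b -> a < x < b ->
  Derive (fun y => exp (RInt f x0 y)) x = f x * exp (RInt f x0 x).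
Proof.
  intros Hf Hx0 Hx.
  apply is_derive_unique, (is_derive_comp exp (RInt f x0) x); [apply is_derive_exp|].
  apply (is_derive_RInt f (RInt f x0) x0 x); [|exact (Hf x Hx)].
  apply (locally_interval _ x a b); try easy.
  intros y Hay Hyb.
  apply (RInt_correct (V := R_CompleteNormedModule)),
        (ex_RInt_continuous (V := R_CompleteNormedModule)).
  intros z [Hz1 Hz2]; apply Hf.
  revert Hz1 Hz2; unfold Rmin, Rmax; simpl in Hay, Hyb.
  destruct (Rle_dec x0 y); lra.
Qed.

Section SqrtSumSquares.

Variables D P : R.
Hypothesis HD : D <> 0.

Let S := sqrt (D ^ 2 + P ^ 2).

Lemma sqrt_sum_sq_pos : 0 < S.
Proof. apply sqrt_lt_R0; assert (0 < D ^ 2) by (apply pow2_gt_0; auto); nra. Qed.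

Lemma sqrt_sum_sq_sqr : S * S = D ^ 2 + P ^ 2.
Proof. apply sqrt_sqrt; nra. Qed.

Lemma sqrt_sum_sq_add_sign_pos (e : R) : e = 1 \/ e = -1 -> 0 < S + e * P.
Proof.
  pose proof sqrt_sum_sq_pos; pose proof sqrt_sum_sq_sqr.
  assert (0 < D ^ 2) by (apply pow2_gt_0; auto).
  intros [-> | ->]; nra.
Qed.

End SqrtSumSquares.

Definition theta (h Phi : R -> R) (e x : R) : R :=
  Phi x * (Derive Phi x + e * sqrt ((h x - Phi x ^ 2) ^ 2 + Derive Phi x ^ 2))
        / (h x - Phi x ^ 2).

Lemma Theta_top_theta (h Phi : R -> R) : Theta_top h Phi = theta h Phi (-1).
Proof. apply functional_extensionality; intro y; unfold Theta_top, theta, Rdiv; ring. Qed.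

Lemma Theta_bot_theta (h Phi : R -> R) : Theta_bot h Phi = theta h Phi 1.
Proof. apply functional_extensionality; intro y; unfold Theta_bot, theta, Rdiv; ring. Qed.

(* The quotient rule for [theta], in terms of the values [F = Phi x],
   [P = Phi' x], [Q = Phi'' x], [H = h x], [K = h' x] and [S] the square root. *)
Definition theta_slope (F P Q H K S e : R) : R :=
  let D := H - F ^ 2 in
  let D' := K - 2 * F * P in
  let S' := (D * D' + P * Q) / S in
  ((P * (P + e * S) + F * (Q + e * S')) * D - F * (P + e * S) * D') / D ^ 2.

Definition phi_ode_rhs (F P H K : R) : R :=
  (3 * F ^ 2 + H) / (F ^ 2 - H) * P ^ 2 / F
  - K * P / (F ^ 2 - H) + (F ^ 4 - H ^ 2) / F.

Lemma theta_slope_riccati (F P Q H K S e : R) :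
  e = 1 \/ e = -1 -> F <> 0 -> H - F ^ 2 <> 0 ->
  0 < S -> S * S = (H - F ^ 2) ^ 2 + P ^ 2 ->
  theta_slope F P Q H K S e + (F * (P + e * S) / (H - F ^ 2)) ^ 2 + H
  = (S + e * P) * F * (Q - phi_ode_rhs F P H K) / (S * (H - F ^ 2)).
Proof.
  intros He HF HD HS HSS.
  assert (HD' : F ^ 2 - H <> 0) by lra.
  (* the identity holds modulo [S^2 = (H - F^2)^2 + P^2] *)
  assert (E : theta_slope F P Q H K S e + (F * (P + e * S) / (H - F ^ 2)) ^ 2 + H
    - (S + e * P) * F * (Q - phi_ode_rhs F P H K) / (S * (H - F ^ 2))
    = (S * S - ((H - F ^ 2) ^ 2 + P ^ 2)) *
      (e * P * (H - F ^ 2) - e * F * (K - 2 * F * P) + 2 * e * F ^ 2 * P + F ^ 2 * S)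
      / (S * (H - F ^ 2) ^ 2)).
  { unfold theta_slope, phi_ode_rhs; cbv zeta.
    destruct He; subst e; field; repeat split; lra. }
  rewrite HSS in E; lra.
Qed.

Section Branches.

Variables h Phi : R -> R.

Lemma is_derive_theta (e x : R) :
  ex_derive h x -> ex_derive Phi x -> ex_derive (Derive Phi) x ->
  h x - Phi x ^ 2 <> 0 ->
  is_derive (theta h Phi e) x
    (theta_slope (Phi x) (Derive Phi x) (Derive (Derive Phi) x) (h x) (Derive h x)
       (sqrt ((h x - Phi x ^ 2) ^ 2 + Derive Phi x ^ 2)) e).
Proof.
  intros Hh HP HP' HD.
  pose proof (sqrt_sum_sq_pos _ (Derive Phi x) HD) as HS.
  pose proof (sqrt_sum_sq_sqr (h x - Phi x ^ 2) (Derive Phi x)) as HSS.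
  assert (Hrad : 0 < (h x - Phi x ^ 2) ^ 2 + Derive Phi x ^ 2).
  { rewrite <- HSS; nra. }
  unfold theta; auto_derive;
    replace ((h x + - (Phi x * (Phi x * 1))) * ((h x + - (Phi x * (Phi x * 1))) * 1)
             + Derive Phi x * (Derive Phi x * 1))
      with ((h x - Phi x ^ 2) ^ 2 + Derive Phi x ^ 2) by ring.
  - repeat split; auto.
  - change (fun y => Phi y) with Phi; change (fun y => h y) with h;
      change (fun y => Derive Phi y) with (Derive Phi).
    set (S := sqrt _) in *.
    unfold theta_slope; cbv zeta; field; lra.
Qed.

Lemma riccati_at_iff (e x : R) :
  e = 1 \/ e = -1 ->
  ex_derive h x -> ex_derive Phi x -> ex_derive (Derive Phi) x ->
  0 < Phi x -> h x <> Phi x ^ 2 ->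
  is_derive (theta h Phi e) x (- (theta h Phi e x ^ 2 + h x)) <->
  Derive (Derive Phi) x = phi_ode_rhs (Phi x) (Derive Phi x) (h x) (Derive h x).
Proof.
  intros He Hh HP HP' HF Hne.
  assert (HD : h x - Phi x ^ 2 <> 0) by lra.
  pose proof (is_derive_theta e x Hh HP HP' HD) as Hd.
  pose proof (sqrt_sum_sq_pos _ (Derive Phi x) HD) as HS.
  pose proof (sqrt_sum_sq_add_sign_pos _ (Derive Phi x) HD e He) as HSe.
  pose proof (theta_slope_riccati (Phi x) (Derive Phi x) (Derive (Derive Phi) x) (h x)
    (Derive h x) _ e He ltac:(lra) HD HS (sqrt_sum_sq_sqr _ _)) as Hdefect.
  fold (theta h Phi e x) in Hdefect.
  set (S := sqrt _) in *; set (Q := Derive (Derive Phi) x) in *;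
    set (R0 := phi_ode_rhs _ _ _ _) in *; set (d := theta_slope _ _ _ _ _ _ _) in *.
  set (c := (S + e * Derive Phi x) * Phi x / (S * (h x - Phi x ^ 2))).
  assert (Hc : c <> 0).
  { unfold c; apply Rmult_integral_contrapositive_currified; [nra|].
    apply Rinv_neq_0_compat, Rmult_integral_contrapositive_currified; lra. }
  assert (Hdefect' : d + theta h Phi e x ^ 2 + h x = c * (Q - R0)).
  { rewrite Hdefect; unfold c; field; lra. }
  split.
  - intro Hr.
    apply is_derive_unique in Hr; apply is_derive_unique in Hd.
    destruct (Rmult_integral c (Q - R0)); lra.
  - intro HQ.
    replace (- (theta h Phi e x ^ 2 + h x)) with d; [exact Hd|].
    rewrite HQ, Rminus_diag, Rmult_0_r in Hdefect'; lra.
Qed.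

Lemma continuous_theta (e x : R) :
  ex_derive h x -> ex_derive Phi x -> ex_derive (Derive Phi) x ->
  h x <> Phi x ^ 2 -> continuous (theta h Phi e) x.
Proof.
  intros Hh HP HP' Hne.
  apply (ex_derive_continuous (K := R_AbsRing) (V := R_NormedModule)).
  eexists; apply is_derive_theta; auto; lra.
Qed.

Lemma theta_top_mul_bot (x : R) :
  h x <> Phi x ^ 2 -> theta h Phi (-1) x * theta h Phi 1 x = - Phi x ^ 2.
Proof.
  intro Hne; assert (HD : h x - Phi x ^ 2 <> 0) by lra.
  pose proof (sqrt_sum_sq_sqr (h x - Phi x ^ 2) (Derive Phi x)) as HSS.
  unfold theta; set (S := sqrt _) in *.
  replace (- Phi x ^ 2)
    with (Phi x ^ 2 * (Derive Phi x ^ 2 - S * S) / (h x - Phi x ^ 2) ^ 2)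
    by (rewrite HSS; field; exact HD).
  field; exact HD.
Qed.

Lemma sqrt_opp_theta_top_mul_bot (x : R) :
  0 < Phi x -> h x <> Phi x ^ 2 ->
  Phi x = sqrt (- (theta h Phi (-1) x * theta h Phi 1 x)).
Proof.
  intros HF Hne.
  rewrite theta_top_mul_bot, Ropp_involutive, sqrt_pow2; lra.
Qed.

Lemma theta_top_neq_bot (x : R) :
  0 < Phi x -> h x <> Phi x ^ 2 -> theta h Phi (-1) x <> theta h Phi 1 x.
Proof.
  intros HF Hne Heq; assert (HD : h x - Phi x ^ 2 <> 0) by lra.
  pose proof (sqrt_sum_sq_pos _ (Derive Phi x) HD) as HS.
  unfold theta in Heq; set (S := sqrt _) in *.
  assert (Hdiff : 2 * Phi x * S / (h x - Phi x ^ 2) = 0).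
  { rewrite <- (Rminus_diag_eq _ _ (eq_sym Heq)); field; exact HD. }
  apply Rmult_integral in Hdiff as [Hz | Hz].
  - nra.
  - apply Rinv_neq_0_compat in HD; contradiction.
Qed.

End Branches.

Theorem corollary2p11
  (h Phi : R -> R) (x0 xm xp : R)
  (Hh : forall x, ex_derive h x /\ continuous (Derive h) x)
  (Hint : xm < x0 < xp)
  (HPhi : forall x, xm < x < xp ->
     ex_derive Phi x /\ ex_derive (Derive Phi) x /\
     continuous (Derive (Derive Phi)) x)
  (Hpos : forall x, xm < x < xp -> 0 < Phi x)
  (Hne : forall x, xm < x < xp -> h x <> Phi x ^ 2) :
  ((riccati_sol h (Theta_top h Phi) xm xp /\
    riccati_sol h (Theta_bot h Phi) xm xp /\
    (exists x, xm < x < xp /\ Theta_top h Phi x <> Theta_bot h Phi x))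
   <->
   (forall x, xm < x < xp ->
      Derive (Derive Phi) x =
        (3 * Phi x ^ 2 + h x) / (Phi x ^ 2 - h x) * (Derive Phi x) ^ 2 / Phi x
        - Derive h x * Derive Phi x / (Phi x ^ 2 - h x)
        + (Phi x ^ 4 - h x ^ 2) / Phi x))
  /\
  (forall x, xm < x < xp ->
     Phi x = sqrt (- (Derive (u_top h Phi x0) x * Derive (u_bot h Phi x0) x)
                   / (u_top h Phi x0 x * u_bot h Phi x0 x))
     /\ Phi x = sqrt (- (Theta_top h Phi x * Theta_bot h Phi x))).
Proof.
  unfold riccati_sol, u_top, u_bot; rewrite Theta_top_theta, Theta_bot_theta.
  assert (Hric : forall e x, e = 1 \/ e = -1 -> xm < x < xp ->
    is_derive (theta h Phi e) x (- (theta h Phi e x ^ 2 + h x)) <->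
    Derive (Derive Phi) x = phi_ode_rhs (Phi x) (Derive Phi x) (h x) (Derive h x)).
  { intros e x He Hx; destruct (HPhi x Hx) as [HP [HP' _]].
    apply riccati_at_iff; auto; apply Hh. }
  assert (Hu : forall e x, e = 1 \/ e = -1 -> xm < x < xp ->
    Derive (fun y => exp (RInt (theta h Phi e) x0 y)) x
    = theta h Phi e x * exp (RInt (theta h Phi e) x0 x)).
  { intros e x He Hx; apply (Derive_exp_RInt _ xm xp); auto.
    intros z Hz; destruct (HPhi z Hz) as [HP [HP' _]].
    apply continuous_theta; auto; apply Hh. }
  split; [split|].
  - intros [Htop _] x Hx; apply (Hric (-1)); auto.
  - intro Hode; split; [|split].
    + intros x Hx; apply (Hric (-1)); auto.
    + intros x Hx; apply (Hric 1); auto.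
    + exists x0; split; [exact Hint|].
      apply theta_top_neq_bot; auto.
  - intros x Hx; rewrite (Hu (-1)), (Hu 1); auto.
    pose proof (sqrt_opp_theta_top_mul_bot h Phi x (Hpos x Hx) (Hne x Hx)) as Hsq.
    split; [|exact Hsq].
    rewrite Hsq at 1.
    f_equal; field; split; apply Rgt_not_eq, exp_pos.
Qed.
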